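(* A topological space $X$ is dense-pseudocompact if and only if every open subspace of $X$ is dense-pseudocompact.
   Context: A space is pseudocompact if every continuous real-valued function on it is bounded. A space $X$ is dense-pseudocompact if every dense subset of $X$ (with the subspace topology) is pseudocompact. *)

From HB Require Import structures.
From mathcomp Require Import all_boot all_order all_algebra.
From mathcomp Require Import all_classical all_reals all_analysis.
Set Implicit Arguments. Unset Strict Implicit. Unset Printing Implicit Defensive.
Import Order.TTheory GRing.Theory Num.Theory.
Import numFieldNormedType.Exports.
Local Open Scope classical_set_scope.
Local Open Scope ring_scope.

(* A subset A of a topological space X, with the subspace topology, is
   pseudocompact: every real-valued function continuous on the subspace A
   is bounded on A.  (Functions A -> R are represented as functions X -> R
   whose restriction to A is continuous for the subspace topology.) *)
Definition pseudocompact_in (R : realType) (X : topologicalType) (A : set X) : Prop :=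
  forall f : X -> R, {within A, continuous f} ->
    exists M : R, forall x, A x -> `|f x| <= M.

(* The subspace A is dense-pseudocompact: every subset D of A that is dense
   in the subspace A (i.e. A is contained in the closure of D) is
   pseudocompact (as a subspace; the subspace topology of D inside A
   coincides with its subspace topology inside X). *)
Definition dense_pseudocompact_in (R : realType) (X : topologicalType) (A : set X) : Prop :=
  forall D : set X, D `<=` A -> A `<=` closure D -> pseudocompact_in R D.

Definition dense_pseudocompact (R : realType) (X : topologicalType) : Prop :=
  dense_pseudocompact_in R (@setT X).

From mathcomp Require Import all_boot all_order all_algebra.
From mathcomp Require Import all_classical all_reals all_analysis.
Import Order.TTheory GRing.Theory Num.Theory.
Import numFieldNormedType.Exports.
Local Open Scope classical_set_scope.

(* The direction "every open subspace is dense-pseudocompact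
   implies X is" is the case U = X.  Conversely, let U be open, D dense in U
   and f continuous on D.  Put V := ~` closure U, an open set disjoint from U.
   Then D `|` V is dense in X, and the function g equal to f on D and to 0
   elsewhere is continuous on D `|` V: near a point of D it agrees with f
   (points of D `|` V near it lie in U, hence in D), near a point of V it is 0.
   Dense-pseudocompactness of X bounds g on D `|` V, hence f on D.
   The file first proves a localisation property of the filters
   [within A (nbhs x)], then a pasting lemma for functions continuous on two
   sets separated by disjoint open sets, then the density and extension
   steps, and finally the theorem. *)

Section SeparatedPasting.
Context {X : topologicalType}.

Lemma within_nbhs_local (x : X) (A B W : set X) :
  nbhs x W -> A `&` W `<=` B ->
  within B (nbhs x) `<=` within A (nbhs x).
Proof.
move=> Wx AWB P BP.
apply: filterS (filterI Wx BP) => y [Wy BPy] Ay.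
exact: BPy (AWB y (conj Ay Wy)).
Qed.

(* Pasting lemma for separated sets: if A and B lie in disjoint open sets,
   a function continuous on A and on B is continuous on A `|` B.  (The
   library's pasting lemma [withinU_continuous] needs A and B closed.) *)
Lemma withinU_continuous_separated {Y : topologicalType} {A B U V : set X}
    {f : X -> Y} :
  open U -> open V -> A `<=` U -> B `<=` V -> U `&` V = set0 ->
  {within A, continuous f} -> {within B, continuous f} ->
  {within A `|` B, continuous f}.
Proof.
move=> oU oV AU BV UV /subspace_continuousP fA /subspace_continuousP fB.
have UVN y : U y -> V y -> False.
  by move=> Uy Vy; have : (U `&` V) y by []; rewrite UV.
apply/subspace_continuousP => x [Ax|Bx].
- apply: cvg_trans (fA x Ax); apply: cvg_fmap2.
  apply: (@within_nbhs_local x (A `|` B) A U).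
    by apply: open_nbhs_nbhs; split => //; exact: AU.
  by move=> y [[//|By] Uy]; case: (UVN y Uy (BV y By)).
- apply: cvg_trans (fB x Bx); apply: cvg_fmap2.
  apply: (@within_nbhs_local x (A `|` B) B V).
    by apply: open_nbhs_nbhs; split => //; exact: BV.
  by move=> y [[Ay|//] Vy]; case: (UVN y (AU y Ay) Vy).
Qed.

End SeparatedPasting.

Lemma closureU_exterior (X : topologicalType) (D U : set X) :
  U `<=` closure D -> closure (D `|` ~` closure U) = [set: X].
Proof.
move=> UD; apply/seteqP; split => // x _; rewrite closureU.
have [Ux|nUx] := pselect (closure U x); last by right; exact: subset_closure.
left; have cUD := closureS UD.
by rewrite -(closure_id (closure D)).1 in cUD; [exact: cUD | exact: closed_closure].
Qed.

(* Transfer of pseudocompactness from D `|` ~` closure U down to a subset D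
   of an open set U: extend a function continuous on D by 0 on the exterior
   of U; the extension is continuous by separated pasting. *)
Lemma pseudocompact_in_open_part {R : realType} {X : topologicalType}
    {D U : set X} :
  open U -> D `<=` U -> pseudocompact_in R (D `|` ~` closure U) ->
  pseudocompact_in R D.
Proof.
move=> oU DU pcDV f fD; set V := ~` closure U.
have oV : open V by rewrite openC; exact: closed_closure.
have UV : U `&` V = set0.
  by apply/seteqP; split => // y [Uy]; apply; exact: subset_closure.
set g := patch (fun=> 0%R) D f.
have gD : {within D, continuous g}.
  by apply: subspace_eq_continuous fD => y Dy; rewrite /from_subspace /g patchT.
have gV : {within V, continuous g}.
  apply: (@subspace_eq_continuous _ _ _ (cst 0%R)); last first.
    exact/continuous_subspaceT/cst_continuous.
  move=> y /set_mem Vy; have nDy : ~ D y.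
    by move=> Dy; apply: Vy; apply: subset_closure; exact: DU.
  by rewrite /from_subspace /g patchC //; apply/mem_set.
have [M gM] := pcDV g (withinU_continuous_separated oU oV DU
  (@subset_refl _ V) UV gD gV).
by exists M => x Dx; have := gM x (or_introl Dx); rewrite /g patchT // inE.
Qed.

Theorem lemma3p2 (R : realType) (X : topologicalType) :
  dense_pseudocompact R X <->
  (forall U : set X, open U -> dense_pseudocompact_in R U).
Proof.
split=> [dpcX U oU D DU UD|dpcU]; last exact: (dpcU _ openT).
apply: (pseudocompact_in_open_part oU DU); apply: dpcX => //.
by rewrite closureU_exterior.
Qed.
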